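(* Fix $c\in(0,1)$ and let $S:=[-1,-c)\cup(c,1]$. For $f\in L^1_{\mathrm{loc}}(\mathbb{R})$ let $$h(\gamma)=Kf(\gamma):=\int_{\mathbb{R}} f(t)\,\chi_S\Big(\frac{\gamma}{|t|}\Big)\,dt,\qquad\gamma\in\mathbb{R}.$$ Then: (i) If $f\in L^1(\mathbb{R})$, then $\sum_{j\in\mathbb{Z}} h(c^j\gamma)=\int_{\mathbb{R}}f(t)\,dt$ for all $\gamma\in\mathbb{R}\setminus\{0\}$. (ii) If $f\in C^k(\mathbb{R})$ for some $k\in\mathbb{N}\cup\{0\}$ and $f$ is supported away from the origin (i.e., $f$ vanishes on a neighborhood of $0$), then $h\in C^{k+1}(\mathbb{R})$.
   Context: $\chi_S$ denotes the indicator function of $S$; equivalently $Kf(\gamma)=\int_{-|\gamma|/c}^{-|\gamma|}f(t)\,dt+\int_{|\gamma|}^{|\gamma|/c}f(t)\,dt$. *)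

From HB Require Import structures.
From mathcomp Require Import all_boot all_order all_algebra.
From mathcomp Require Import all_classical all_reals all_analysis.
Set Implicit Arguments. Unset Strict Implicit. Unset Printing Implicit Defensive.
Import Order.TTheory GRing.Theory Num.Theory.
Import numFieldNormedType.Exports.
Local Open Scope classical_set_scope.
Local Open Scope ring_scope.

Definition Sset (R : realType) (c : R) : set R :=
  [set x | (-1 <= x < - c) \/ (c < x <= 1)].

Definition Kop (R : realType) (c : R) (f : R -> R) (g : R) : R :=
  Rintegral (@lebesgue_measure R) setT
    (fun t => f t * \1_(Sset c) (g / `|t|)).

Fixpoint Ck (R : realType) (k : nat) (f : R -> R) : Prop :=
  match k with
  | 0 => continuous f
  | k'.+1 => (forall x : R, derivable f x 1) /\ Ck k' (derive1 f)
  end.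

From HB Require Import structures.
From mathcomp Require Import all_boot all_order all_algebra.
From mathcomp Require Import all_classical all_reals all_analysis.
From mathcomp Require Import lra ring.
Import Order.TTheory GRing.Theory Num.Theory.
Import numFieldNormedType.Exports.
Local Open Scope classical_set_scope.
Local Open Scope ring_scope.
Set Implicit Arguments. Unset Strict Implicit. Unset Printing Implicit Defensive.

(* The indicator chi_S(g / |t|) is that of the annulus A(|g|) = {t | |g| <= |t| < |g| / c},
   so Kf(g) is the integral of f over A(|g|).  For g <> 0 the annuli A(c^j |g|), j in Z,
   partition R \ {0}, and (i) is the countable additivity of the integral of f.
   For (ii), let P be a primitive of f; for g > 0,
   Kf(g) = (P(g / c) - P(g)) - (P(-g / c) - P(-g)),
   which is C^(k+1) because P is.  Kf is even, and it vanishes near 0 because f does. *)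

Lemma exists_expr_lt (R : realType) (x e : R) : 0 <= x < 1 -> 0 < e -> exists n, x ^+ n < e.
Proof.
move=> /andP[x0 x1] e0.
have : x ^+ n @[n --> \oo] --> (0 : R) by apply: cvg_expr; rewrite ger0_norm.
by move=> /cvgr_lt/(_ e e0)[N _ xN]; exists N; apply: xN => /=.
Qed.

Lemma ex_crossing (P : pred nat) : ~~ P 0 -> (exists n, P n) -> exists n, ~~ P n /\ P n.+1.
Proof.
move=> nP0 exP; case: (ex_minnP exP) => -[|n] Pn min_n; first by rewrite Pn in nP0.
by exists n; split=> //; apply/negP => /min_n; rewrite ltnn.
Qed.

Section Rintegral_series.
Context d (T : measurableType d) (R : realType) (mu : {measure set T -> \bar R}).

Lemma cvg_series_Rintegral (f : T -> R) (F : (set T)^nat) :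
  trivIset setT F -> (forall k, measurable (F k)) ->
  mu.-integrable (\bigcup_k F k) (EFin \o f) ->
  series (fun k => \int[mu]_(x in F k) f x) @ \oo --> \int[mu]_(x in \bigcup_k F k) f x.
Proof.
move=> tF mF intf; pose e k := (\int[mu]_(x in F k) (EFin \o f) x)%E.
have e_fin k : e k \is a fin_num.
  apply: integrable_fin_num => //; apply: integrableS intf => //; first exact: bigcupT_measurable.
  exact: bigcup_sup.
have e_sum : summable [set: nat] e := integrable_summable tF mF intf.
pose A n := \sum_(0 <= k < n) fine (e^\+ k)%E; pose B n := \sum_(0 <= k < n) fine (e^\- k)%E.
have sAB : series (fun k => \int[mu]_(x in F k) f x) = A \- B.
  apply/funext => n; rewrite /series /= -sumrB; apply: eq_bigr => k _.
  rewrite /Rintegral -/(e k) funeposE funenegE; case: (e k) (e_fin k) => // r _ /=.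
  by rewrite -!EFin_max /= !maxEle; case: (lerP r 0); case: (lerP (- r) 0) => /=; lra.
have {}e_sum : summable (fun k => xpredT k) e.
  by rewrite (_ : (fun k => _) = [set: nat]) //; exact/seteqP.
have cvg_series : cvgn (series (fun k => \int[mu]_(x in F k) f x)).
  rewrite sAB; apply: is_cvgB.
  - exact: summable_cvg (fun k _ => funepos_ge0 e k) (summable_funepos e_sum).
  - exact: summable_cvg (fun k _ => funeneg_ge0 e k) (summable_funeneg e_sum).
suff <- : limn (series (fun k => \int[mu]_(x in F k) f x)) = \int[mu]_(x in \bigcup_k F k) f x.
  exact: cvg_series.
apply: EFin_inj; rewrite -EFin_lim // /Rintegral fineK; last first.
  by apply: integrable_fin_num => //; exact: bigcupT_measurable.
rewrite integral_bigcup //; congr (limn _); apply/funext => n /=.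
by rewrite -sumEFin; apply: eq_bigr => k _; rewrite fineK //; exact: e_fin.
Qed.

End Rintegral_series.

Section CkOn.
Variable R : realType.
Implicit Types (U V : set R) (f g : R -> R).

Fixpoint CkOn (k : nat) U f : Prop :=
  match k with
  | 0 => forall x, U x -> {for x, continuous f}
  | k.+1 => (forall x, U x -> derivable f x 1) /\ CkOn k U (derive1 f)
  end.

Lemma CkOnT k f : CkOn k setT f <-> Ck k f.
Proof.
elim: k f => [|k IH] f /=; first by split=> cf x => [|_]; exact: cf.
by rewrite IH; split=> -[df cf']; split=> // x; exact: df.
Qed.

Lemma CkOnS k U V f : V `<=` U -> CkOn k U f -> CkOn k V f.
Proof.
move=> VU; elim: k f => [|k IH] f /=; first by move=> cf x /VU; exact: cf.
by move=> [df /IH cf']; split=> // x /VU; exact: df.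
Qed.

Lemma CkOn_local k U f :
  (forall x, U x -> exists2 V, V x & CkOn k V f) -> CkOn k U f.
Proof.
elim: k f => [|k IH] f /= Uf.
  by move=> x /Uf[V Vx]; apply.
split; first by move=> x /Uf[V Vx [df _]]; exact: df.
by apply: IH => x /Uf[V Vx [_ cf']]; exists V.
Qed.

Lemma CkOn_eq k U f g : open U -> {in U, f =1 g} -> CkOn k U g -> CkOn k U f.
Proof.
move=> oU; elim: k f g => [|k IH] f g fg /=; have gf : {in U, g =1 f} by move=> y /fg.
  move=> cg x Ux; rewrite /prop_for /continuous_at (fg x (mem_set Ux)).
  exact: cvg_trans (near_eq_cvg (open_in_nearW oU gf (mem_set Ux))) (cg x Ux).
move=> [dg cg']; split=> [x Ux|].
  exact: near_eq_derivable (open_in_nearW oU gf (mem_set Ux)) (dg x Ux).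
apply: IH cg' => x Ux; rewrite !derive1E.
exact: near_eq_derive (open_in_nearW oU fg Ux).
Qed.

Lemma CkOn_cst k U (a : R) : CkOn k U (cst a).
Proof.
elim: k a => [|k IH] a /=; first by move=> x _; exact: cst_continuous.
split=> [x _|]; first exact: derivable_cst.
have -> : derive1 (cst a) = cst 0 by apply/funext => x; exact: derive1_cst.
exact: IH.
Qed.

Lemma CkOnB k U f g : open U -> CkOn k U f -> CkOn k U g -> CkOn k U (fun x => f x - g x).
Proof.
move=> oU; elim: k f g => [|k IH] f g /=.
  by move=> cf cg x Ux; apply: cvgB; [exact: cf | exact: cg].
move=> [df cf'] [dg cg']; split=> [x Ux|]; first exact: derivableB (df x Ux) (dg x Ux).
apply: CkOn_eq oU _ (IH _ _ cf' cg') => x /set_mem Ux.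
by rewrite !derive1E (deriveB (df x Ux) (dg x Ux)).
Qed.

Lemma CkOnMl k U (a : R) f : open U -> CkOn k U f -> CkOn k U (fun x => a * f x).
Proof.
move=> oU; elim: k f => [|k IH] f /=.
  by move=> cf x Ux; apply: cvgM; [exact: cvg_cst | exact: cf].
move=> [df cf']; split=> [x Ux|].
  exact: (@derivableZ _ R^o R^o f a x 1 (df x Ux)).
apply: CkOn_eq oU _ (IH _ cf') => x /set_mem Ux.
by rewrite derive1Ml //; exact: df.
Qed.

Lemma CkOn_comp_mull k U V (a : R) f : open U -> (forall x, U x -> V (a * x)) ->
  CkOn k V f -> CkOn k U (fun x => f (a * x)).
Proof.
move=> oU UV; elim: k f => [|k IH] f /=.
  move=> cf x Ux; apply: continuous_comp (cf _ (UV x Ux)).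
  by apply: cvgM; [exact: cvg_cst | exact: cvg_id].
have da x : derivable ( *%R a) x 1.
  by apply: derivableM; [exact: derivable_cst | exact: derivable_id].
move=> [df cf']; split=> [x Ux|].
  by have [] := is_derive1_comp (derivableP (df _ (UV x Ux))) (derivableP (da x)).
apply: CkOn_eq oU _ (CkOnMl a oU (IH _ cf')) => x /set_mem Ux.
rewrite (derive1_comp (da x) (df _ (UV x Ux))) mulrC; congr (_ * _).
by rewrite (derive1Ml (f := id)) ?derive1_id ?mulr1 //; exact: derivable_id.
Qed.

Lemma Ck_continuous k f : Ck k f -> continuous f.
Proof.
case: k => [//|k] /= [df _] x.
exact/differentiable_continuous/derivable1_diffP.
Qed.

Lemma continuous_integrable_itvcc f (a b : R) :
  continuous f -> lebesgue_measure.-integrable `[a, b] (EFin \o f).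
Proof.
move=> cf; apply: continuous_compact_integrable; first exact: segment_compact.
exact: continuous_subspaceT.
Qed.

Lemma CkOn_parameterized_integral k a f : Ck k f ->
  CkOn k.+1 [set x | a < x] (fun x => parameterized_integral lebesgue_measure a x f).
Proof.
move=> cf; pose F x := parameterized_integral lebesgue_measure a x f.
have FTC x : a < x -> derivable F x 1 /\ derive1 F x = f x.
  move=> ax; apply: (@continuous_FTC1 _ f (BLeft a) x (x + 1)); rewrite ?ltrDl //.
  - exact/continuous_integrable_itvcc/(Ck_continuous cf).
  - exact: Ck_continuous cf x.
split=> [x /FTC[] //|].
apply: CkOn_eq (@open_gt _ a) _ (CkOnS (@subsetT _ _) (proj2 (CkOnT k f) cf)).
by move=> x /set_mem/FTC[_ ->].
Qed.

End CkOn.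

Section kernel.
Variables (R : realType) (c : R).
Hypothesis c01 : 0 < c < 1.
Let c_gt0 : 0 < c. Proof. by case/andP: c01. Qed.
Notation mu := (@lebesgue_measure R).
Implicit Types (f : R -> R) (b g t : R).

Definition annulus b : set R := [set t | b <= `|t| /\ c * `|t| < b].

Lemma Sset_normr x : Sset c x <-> c < `|x| <= 1.
Proof.
have /andP[c0 c1] := c01; rewrite /Sset /=.
case: (lerP 0 x) => x0; [rewrite ger0_norm // | rewrite ltr0_norm //].
  by split=> [[]|] /andP[h1 h2]; [exfalso; lra | apply/andP | right; apply/andP].
by split=> [[]|] /andP[h1 h2];
  [apply/andP; split; lra | exfalso; lra | left; apply/andP; split; lra].
Qed.

Lemma Sset_annulus g t : Sset c (g / `|t|) <-> annulus `|g| t.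
Proof.
have /andP[c0 c1] := c01; rewrite Sset_normr /annulus /=.
have [->|t0] := eqVneq t 0.
  by rewrite normr0 invr0 mulr0 normr0 mulr0; split=> [/andP[]|[]]; [lra | lra].
have t_gt0 : 0 < `|t| by rewrite normr_gt0.
rewrite normrM normfV normr_id ltr_pdivlMr // ler_pdivrMr // mul1r [c * _]mulrC.
by split=> [/andP[]|[]] h1 h2 //; apply/andP.
Qed.

Lemma Kop_annulus f g : Kop c f g = \int[mu]_(t in annulus `|g|) f t.
Proof.
rewrite /Kop [RHS]Rintegral_mkcond; apply: eq_Rintegral => t _.
rewrite patchE indicE; suff -> : (g / `|t| \in Sset c) = (t \in annulus `|g|).
  by case: ifP; rewrite ?mulr1 ?mulr0.
by apply/idP/idP => /set_mem/Sset_annulus/mem_set.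
Qed.

Lemma annulus_itv b : 0 < b -> annulus b = `[b, b / c[ `|` `](- (b / c)), - b].
Proof.
move=> b0; have /andP[c0 c1] := c01; have bc : b <= b / c by rewrite ler_pdivlMr //; nra.
apply/seteqP; split=> t; rewrite /annulus /= !in_itv /= [c * _]mulrC -ltr_pdivlMr //;
  move: (b / c) bc => bc b_le_bc.
- by case: (lerP 0 t) => t0; [rewrite ger0_norm // | rewrite ltr0_norm //] => -[h1 h2];
    [left | right]; apply/andP; split; lra.
- by case: (lerP 0 t) => t0; [rewrite ger0_norm // | rewrite ltr0_norm //] =>
    -[/andP[h1 h2] | /andP[h1 h2]]; split; lra.
Qed.

Lemma measurable_annulus b : measurable (annulus b).
Proof.
have [b0|b_le0] := ltP 0 b.
  by rewrite annulus_itv //; apply: measurableU; exact: measurable_itv.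
rewrite (_ : annulus b = set0); first exact: measurable0.
apply/seteqP; split=> // t [bt ctb]; have : 0 <= c * `|t| by rewrite pmulr_rge0.
lra.
Qed.

Lemma annulus_neq0 b t : annulus b t -> t != 0.
Proof. by case=> bt ctb; apply/eqP => t0; move: bt ctb; rewrite t0 normr0 mulr0; lra. Qed.

Lemma annulus_disjoint b b' t : b / c <= b' -> annulus b t -> ~ annulus b' t.
Proof.
move=> bb' [_ tb] [b't _]; have /andP[c0 c1] := c01.
by move: tb; rewrite mulrC -ltr_pdivlMr //; lra.
Qed.

Lemma trivIset_annulus (r : nat -> R) :
  (forall i j, (i < j)%N -> r j / c <= r i \/ r i / c <= r j) ->
  trivIset setT (fun j => annulus (r j)).
Proof.
move=> r_sep i j _ _ [t [ti tj]]; case: (ltngtP i j) => // ij; case: (r_sep _ _ ij).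
- by move/annulus_disjoint => /(_ t tj).
- by move/annulus_disjoint => /(_ t ti).
- by move/annulus_disjoint => /(_ t ti).
- by move/annulus_disjoint => /(_ t tj).
Qed.

Lemma trivIset_annulus_expr a : 0 < a -> trivIset setT (fun j => annulus (c ^+ j * a)).
Proof.
move=> a0; have /andP[c0 c1] := c01; apply: trivIset_annulus => i j ij; left.
have j_gt0 : (0 < j)%N by exact: leq_ltn_trans (leq0n i) ij.
rewrite -(prednK j_gt0) exprS (_ : c * _ * a / c = c ^+ j.-1 * a); last by field; rewrite gt_eqF.
by rewrite ler_wpM2r ?(ltW a0) // ler_wiXn2l ?ltW // -ltnS prednK.
Qed.

Lemma trivIset_annulus_exprVn a : 0 < a -> trivIset setT (fun j => annulus (c ^- j.+1 * a)).
Proof.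
move=> a0; have /andP[c0 c1] := c01; apply: trivIset_annulus => i j ij; right.
rewrite -!exprVn mulrAC -exprSr ler_wpM2r ?(ltW a0) // ler_weXn2l //.
by rewrite invf_ge1 // ltW.
Qed.

Lemma annulus_cover a t : 0 < a -> t != 0 ->
  (exists j, annulus (c ^+ j * a) t) \/ (exists j, annulus (c ^- j.+1 * a) t).
Proof.
move=> a0 t0; have /andP[c0 c1] := c01; have t_gt0 : 0 < `|t| by rewrite normr_gt0.
have c_exists e : 0 < e -> exists n, c ^+ n < e by apply: exists_expr_lt; rewrite ltW.
have [ct_a|a_ct] := ltP (c * `|t|) a.
  left; have [a_t|t_a] := leP a `|t|; first by exists 0%N; rewrite mul1r.
  have [n [/negP tn tSn]] : exists n, ~~ (c ^+ n * a <= `|t|) /\ c ^+ n.+1 * a <= `|t|.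
    apply: (ex_crossing (P := fun n => c ^+ n * a <= `|t|)); first by rewrite mul1r -ltNge.
    have [n cn] := c_exists _ (divr_gt0 t_gt0 a0).
    by exists n; rewrite -ler_pdivlMr // ltW.
  exists n.+1; split=> //; rewrite exprS -mulrA ltr_pM2l //.
  by rewrite ltNge; exact/negP.
right; have [n [/negP ant Snt]] : exists n, ~~ (c ^+ n * `|t| < a) /\ c ^+ n.+1 * `|t| < a.
  apply: (ex_crossing (P := fun n => c ^+ n * `|t| < a)).
    by rewrite mul1r -leNgt; apply: le_trans a_ct _; rewrite ler_piMl ?ltW.
  have [n cn] := c_exists _ (divr_gt0 a0 t_gt0).
  by exists n; rewrite -ltr_pdivlMr.
case: n ant Snt => [|j] ant Snt; first by move: Snt; rewrite expr1 ltNge a_ct.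
exists j; rewrite /annulus /= ler_pdivrMl ?exprn_gt0 // ltr_pdivlMl ?exprn_gt0 // mulrA -exprSr.
by split=> //; rewrite leNgt; exact/negP.
Qed.

Lemma annulus_expr_disjoint_exprVn a i j t : 0 < a ->
  annulus (c ^+ i * a) t -> ~ annulus (c ^- j.+1 * a) t.
Proof.
move=> a0; have /andP[c0 c1] := c01; apply: annulus_disjoint.
have ci : c ^+ i <= 1 by rewrite exprn_ile1 ?ltW.
have cj : c^-1 <= c ^- j.+1 by rewrite -exprVn -{1}(expr1 c^-1) ler_weXn2l // invf_ge1 // ltW.
apply: (@le_trans _ _ (a / c)).
  by rewrite ler_pM2r ?invr_gt0 //; exact: ler_piMl (ltW a0) ci.
by rewrite [a / c]mulrC ler_pM2r.
Qed.

Lemma Rintegral_annuli a f : 0 < a -> mu.-integrable setT (EFin \o f) ->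
  \int[mu]_(t in setT) f t = \int[mu]_(t in \bigcup_j annulus (c ^+ j * a)) f t
                           + \int[mu]_(t in \bigcup_j annulus (c ^- j.+1 * a)) f t.
Proof.
move=> a0 intf; set U1 := \bigcup_j _; set U2 := \bigcup_j _.
have mU1 : measurable U1 by apply: bigcupT_measurable => j; exact: measurable_annulus.
have mU2 : measurable U2 by apply: bigcupT_measurable => j; exact: measurable_annulus.
have -> : [set: R] = (U1 `|` U2) `|` [set 0].
  apply/seteqP; split=> // t _; have [->|t0] := eqVneq t 0; [by right | left].
  by case: (annulus_cover a0 t0) => -[j ?]; [left | right]; exists j.
have intS D : measurable D -> mu.-integrable D (EFin \o f).
  by move=> mD; exact: integrableS intf.
rewrite Rintegral_setU ?Rintegral_set1 ?addr0 ?Rintegral_setU ?intS //;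
  try by do ?apply: measurableU.
- apply/disj_setPS => t; rewrite /U1 /U2 => -[[i _ ti] [j _ tj]].
  exact: annulus_expr_disjoint_exprVn a0 ti tj.
- apply/disj_setPS => t; rewrite /U1 /U2 /=.
  move=> -[[[j _ /annulus_neq0 t0] | [j _ /annulus_neq0 t0]] t_eq0].
  all: by rewrite t_eq0 eqxx in t0.
Qed.

Lemma Kop_geometric_sums f g : mu.-integrable setT (EFin \o f) -> g != 0 ->
  let u1 j := Kop c f (c ^+ j * g) in let u2 j := Kop c f (c ^- j.+1 * g) in
  [/\ cvgn (series u1), cvgn (series u2) &
      limn (series u1) + limn (series u2) = \int[mu]_(t in setT) f t].
Proof.
move=> intf g0 u1 u2; have a0 : 0 < `|g| by rewrite normr_gt0.
have intS D : measurable D -> mu.-integrable D (EFin \o f).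
  by move=> mD; exact: integrableS intf.
have cv1 : series u1 @ \oo --> \int[mu]_(t in \bigcup_j annulus (c ^+ j * `|g|)) f t.
  rewrite (_ : u1 = fun j => \int[mu]_(t in annulus (c ^+ j * `|g|)) f t).
    apply: (cvg_series_Rintegral (mu := mu)) (trivIset_annulus_expr a0) _ _ => [j|].
      exact: measurable_annulus.
    by apply/intS/bigcupT_measurable => j; exact: measurable_annulus.
  by apply/funext => j; rewrite /u1 Kop_annulus normrM normrX gtr0_norm.
have cv2 : series u2 @ \oo --> \int[mu]_(t in \bigcup_j annulus (c ^- j.+1 * `|g|)) f t.
  rewrite (_ : u2 = fun j => \int[mu]_(t in annulus (c ^- j.+1 * `|g|)) f t).
    apply: (cvg_series_Rintegral (mu := mu)) (trivIset_annulus_exprVn a0) _ _ => [j|].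
      exact: measurable_annulus.
    by apply/intS/bigcupT_measurable => j; exact: measurable_annulus.
  by apply/funext => j; rewrite /u2 Kop_annulus normrM normfV normrX gtr0_norm.
split; [exact: cvgP cv1 | exact: cvgP cv2 |].
by rewrite (cvg_lim _ cv1) // (cvg_lim _ cv2) // (Rintegral_annuli a0 intf).
Qed.

Lemma KopN f g : Kop c f (- g) = Kop c f g.
Proof. by rewrite !Kop_annulus normrN. Qed.

Lemma Kop_parameterized_integral M f b : mu.-integrable `[- M, M] (EFin \o f) ->
  0 < b -> b <= c * M ->
  let P x := parameterized_integral mu (- M) x f in
  Kop c f b = (P (b / c) - P b) - (P (- (b / c)) - P (- b)).
Proof.
move=> intf b0 bM P; have /andP[c0 c1] := c01.
have bc : b <= b / c by rewrite ler_pdivlMr //; nra.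
have bcM : b / c <= M by rewrite ler_pdivrMr // mulrC.
have intS (l r : itv_bound R) : (BLeft (- M) <= l)%O -> (r <= BRight M)%O ->
    mu.-integrable [set` Interval l r] (EFin \o f).
  by move=> lM rM; apply: integrableS intf => //; exact: subset_itvScc.
rewrite Kop_annulus gtr0_norm // annulus_itv // Rintegral_setU //; first last.
- apply/disj_setPS => t []; rewrite /= !in_itv /= => /andP[h1 h2] /andP[h3 h4]; lra.
- apply: integrableS (intS _ _ _ _) => //; first exact: measurableU; rewrite ?bnd_simp; try lra.
  by move=> t [] /=; rewrite !in_itv /= => /andP[h1 h2]; apply/andP; split; lra.
rewrite opprB /P /parameterized_integral; congr (_ + _).
- rewrite (@Rintegral_itvB _ f (BLeft (- M)) (BRight (b / c)) b) ?intS ?bnd_simp; try lra.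
  by rewrite Rintegral_itv_bndo_bndc ?Rintegral_itv_obnd_cbnd ?intS ?bnd_simp //; lra.
- by rewrite (@Rintegral_itvB _ f _ (BRight (- b)) (- (b / c))) ?intS ?bnd_simp //; lra.
Qed.

Lemma CkOn_Kop_pos k f b : Ck k f -> 0 < b -> CkOn k.+1 `]0, b[ (Kop c f).
Proof.
move=> cf b0; have /andP[c0 c1] := c01.
(* From [- M] the primitive [P] is C^(k+1) at all four points +-y, +-y/c, 0 < y < b. *)
pose M := b / c; pose P x := parameterized_integral mu (- M) x f.
have bM : b <= M by rewrite ler_pdivlMr //; nra.
have P_Ck : CkOn k.+1 [set x | - M < x] P := CkOn_parameterized_integral (- M) cf.
have P_Ck_at a : (forall y, 0 < y < b -> - M < a * y) -> CkOn k.+1 `]0, b[ (fun y => P (a * y)).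
  by move=> Ma; apply: CkOn_comp_mull P_Ck => // y; rewrite /= in_itv /=; exact: Ma.
apply: (CkOn_eq (itv_open _ _) (g := fun y =>
  (P (c^-1 * y) - P (1 * y)) - (P (- c^-1 * y) - P (-1 * y)))).
  move=> y /set_mem; rewrite /= in_itv /= => /andP[y0 yb].
  rewrite (Kop_parameterized_integral (M := M)) ?mul1r ?mulN1r ?mulNr 1?[c^-1 * y]mulrC //.
    exact/continuous_integrable_itvcc/(Ck_continuous cf).
  by rewrite /M mulrC divfK ?gt_eqF //; exact: ltW.
apply: CkOnB; [exact: itv_open | apply: CkOnB | apply: CkOnB]; try exact: itv_open;
  apply: P_Ck_at => y /andP[y0 yb].
- have : 0 < c^-1 * y by rewrite mulr_gt0 ?invr_gt0.
  lra.
- lra.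
- by rewrite mulNr ltrN2 /M mulrC ltr_pM2r ?invr_gt0.
- lra.
Qed.

Lemma CkOn_Kop_neg k f b : Ck k f -> 0 < b -> CkOn k.+1 `](- b), 0[ (Kop c f).
Proof.
move=> cf b0; apply: (CkOn_eq (g := fun y => Kop c f (-1 * y)) (itv_open _ _)).
  by move=> y _; rewrite mulN1r KopN.
apply: CkOn_comp_mull (itv_open _ _) _ (CkOn_Kop_pos cf b0) => y.
by rewrite /= !in_itv /= mulN1r => /andP[h1 h2]; apply/andP; split; lra.
Qed.

Lemma Kop_eq0 f e g : (forall t, `|t| < e -> f t = 0) -> `|g| < c * e -> Kop c f g = 0.
Proof.
move=> f0 ge; rewrite Kop_annulus /Rintegral -[RHS]/(fine 0%E) -(integral0 mu (annulus `|g|)).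
congr fine; apply: eq_integral => t /set_mem[gt ct]; rewrite f0 //.
by rewrite -(ltr_pM2l c_gt0); exact: lt_trans ct ge.
Qed.

Lemma Ck_Kop k f : Ck k f -> (exists2 e, 0 < e & forall t, `|t| < e -> f t = 0) ->
  Ck k.+1 (Kop c f).
Proof.
move=> cf [e e0 f0]; apply/CkOnT/CkOn_local => x _.
have [xe|ex] := ltP `|x| (c * e).
  exists `](- (c * e)), (c * e)[%classic; first by rewrite /= in_itv /= -ltr_norml.
  apply: CkOn_eq (itv_open _ _) _ (CkOn_cst _ _ 0) => y.
  by rewrite inE /= in_itv /= -ltr_norml; exact: Kop_eq0.
have [x0|x0] := ltP 0 x.
  exists `]0, (2 * x)[%classic; last by apply: CkOn_Kop_pos cf _; lra.
  by rewrite /= in_itv /=; apply/andP; split; lra.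
have xneg : x < 0.
  move: ex; rewrite ler0_norm // => ex; have : 0 < c * e by rewrite mulr_gt0.
  lra.
exists `](- (- 2 * x)), 0[%classic; last by apply: CkOn_Kop_neg cf _; lra.
by rewrite /= in_itv /=; apply/andP; split; lra.
Qed.

End kernel.

Theorem proposition3p3 (R : realType) (c : R) (hc : 0 < c < 1) :
  (forall f : R -> R,
     (@lebesgue_measure R).-integrable setT (EFin \o f) ->
     forall g : R, g != 0 ->
       let u1 := fun j : nat => Kop c f (c ^+ j * g) in
       let u2 := fun j : nat => Kop c f (c ^- j.+1 * g) in
       [/\ cvgn (series u1), cvgn (series u2) &
           limn (series u1) + limn (series u2)
             = Rintegral (@lebesgue_measure R) setT f])
  /\
  (forall (k : nat) (f : R -> R),
     Ck k f ->
     (exists2 e : R, 0 < e & forall t : R, `|t| < e -> f t = 0) ->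
     Ck k.+1 (Kop c f)).
Proof.
split=> [f intf g g0 | k f cf f0]; first exact: Kop_geometric_sums.
exact: Ck_Kop.
Qed.
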